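(* Let $(E,\|\cdot\|)$ be a real Banach space, $I=[a,b]$ a closed real interval, $E_0=C(I,E)$ the space of continuous functions $I\to E$, and fix $c\in I$. Let $\mathcal{K}$ be the set of constant functions in $E_0$, let $\alpha:E\times E\to[0,\infty)$ and let $\mathcal{T}:E_0\to E$ be a mapping. Assume: (a) $\mathcal{T}$ is $\alpha$-admissible: for all $\varphi,\xi\in E_0$, $\alpha(\varphi(c),\xi(c))\ge1$ implies $\alpha(\mathcal{T}\varphi,\mathcal{T}\xi)\ge1$; (b) $\mathcal{T}$ is $E_0$-starting: there exists $\varphi_0\in E_0$ with $\alpha(\varphi_0(c),\mathcal{T}\varphi_0)\ge1$. Then $\mathcal{T}$ is $\mathcal{K}$-starting: there exists $\varphi_0\in\mathcal{K}$ with $\alpha(\varphi_0(c),\mathcal{T}\varphi_0)\ge1$. *)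

From HB Require Import structures.
From mathcomp Require Import all_boot all_order all_algebra.
From mathcomp Require Import all_classical all_reals all_analysis.
Set Implicit Arguments. Unset Strict Implicit. Unset Printing Implicit Defensive.
Import Order.TTheory GRing.Theory Num.Theory.
Local Open Scope classical_set_scope.
Local Open Scope ring_scope.

(* The closed interval I = [a,b] as a type, with the subspace topology
   (initial topology of the inclusion into R). *)
Definition Iset (R : realType) (a b : R) : set R^o := `[a, b].
Notation Icc a b := (set_type (Iset a b)).

Definition C0 (R : realType) (E : completeNormedModType R) (a b : R) : Type :=
  {f : Icc a b -> E | continuous f}.

Definition constfuns (R : realType) (E : completeNormedModType R) (a b : R)
  : set (C0 E a b) :=
  [set phi | exists x : E, forall t : Icc a b, sval phi t = x].

Definition alpha_admissible (R : realType) (E : completeNormedModType R) (a b : R)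
  (c : Icc a b) (alpha : E -> E -> R) (T : C0 E a b -> E) : Prop :=
  forall phi xi : C0 E a b,
    1 <= alpha (sval phi c) (sval xi c) -> 1 <= alpha (T phi) (T xi).

Definition starting (R : realType) (E : completeNormedModType R) (a b : R)
  (c : Icc a b) (alpha : E -> E -> R) (T : C0 E a b -> E) (S : set (C0 E a b))
  : Prop :=
  exists2 phi0, S phi0 & 1 <= alpha (sval phi0 c) (T phi0).
Arguments constfuns {R} E a b.

From HB Require Import structures.
From mathcomp Require Import all_boot all_order all_algebra.
From mathcomp Require Import all_classical all_reals all_analysis.
Import Order.TTheory GRing.Theory Num.Theory.
Local Open Scope classical_set_scope.
Local Open Scope ring_scope.

(* If alpha (phi0 c) (T phi0) >= 1, take the constant function psi = T phi0:
   then psi c = T phi0, so admissibility applied to the pair (phi0, psi)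
   gives alpha (psi c) (T psi) >= 1. *)

Definition constC0 (R : realType) (E : completeNormedModType R) (a b : R)
  (x : E) : C0 E a b :=
  exist (fun f : Icc a b -> E => continuous f) (fun=> x) (@cst_continuous _ E x).
Arguments constC0 {R E} a b x.

Lemma constC0_constfuns (R : realType) (E : completeNormedModType R) (a b : R)
  (x : E) : constfuns E a b (constC0 a b x).
Proof. by exists x. Qed.

Theorem proposition4 (R : realType) (E : completeNormedModType R) (a b : R)
  (c : Icc a b) (alpha : E -> E -> R) (T : C0 E a b -> E) :
  (forall x y : E, 0 <= alpha x y) ->
  alpha_admissible c alpha T ->
  starting c alpha T setT ->
  starting c alpha T (constfuns E a b).
Proof.
move=> _ adm [phi0 _ start0].
exists (constC0 a b (T phi0)); first exact: constC0_constfuns.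
exact: adm.
Qed.
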